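(* Let $G$ be an upward planar digraph with maximum in- and outdegree at most two, and let $e=(u,v)$ be a transitive edge of $G$, i.e., there exists a directed path from $u$ to $v$ in $G$ different from $e$. Then $e$ is a bad edge in every upward planar embedding of $G$.
   Context: A planar drawing of a digraph is upward if every edge $(u,v)$ is drawn as a curve strictly increasing in $y$ from $u$ to $v$; an upward planar embedding is the equivalence class of upward planar drawings with the same left-to-right orderings of incoming edges and of outgoing edges around each vertex. If a vertex has two incoming (outgoing) edges, these are its left and right incoming (outgoing) edges according to the embedding. An edge $e=(u,v)$ is a bad edge if it is the left outgoing edge of $u$ and the left incoming edge of $v$, or the right outgoing edge of $u$ and the right incoming edge of $v$. *)

From mathcomp Require Import all_boot.
From Stdlib Require Import Reals.
Set Implicit Arguments. Unset Strict Implicit. Unset Printing Implicit Defensive.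

Record digraph := Digraph {
  vert : finType;
  edge : finType;
  src : edge -> vert;
  tgt : edge -> vert
}.

Definition simple_digraph (G : digraph) : Prop :=
  (forall e f : edge G, src e = src f -> tgt e = tgt f -> e = f) /\
  (forall e : edge G, src e <> tgt e).

Definition outdeg (G : digraph) (v : vert G) : nat := #|[set e | src e == v]|.
Definition indeg (G : digraph) (v : vert G) : nat := #|[set e | tgt e == v]|.

Fixpoint walk_from (G : digraph) (u v : vert G) (p : seq (edge G)) : Prop :=
  match p with
  | [::] => u = v
  | e :: p' => src e = u /\ walk_from (tgt e) v p'
  end.
Definition dpath (G : digraph) (u v : vert G) (p : seq (edge G)) : Prop :=
  p <> [::] /\ walk_from u v p.

Definition transitive_edge (G : digraph) (e : edge G) : Prop :=
  exists p, dpath (src e) (tgt e) p /\ p <> [:: e].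

Local Open Scope R_scope.

(* An upward planar drawing of G in the plane R^2: vertices are distinct
   points, each edge is a continuous curve [0,1] -> R^2 (given on all of R,
   only its restriction to [0,1] matters) from the source to the target with
   strictly increasing y-coordinate; curves pass through no vertex in their
   interior, and two distinct curves meet only at common endpoints. *)
Record upward_planar_drawing (G : digraph) := UPDrawing {
  px : vert G -> R;
  py : vert G -> R;
  cx : edge G -> R -> R;
  cy : edge G -> R -> R;
  pos_inj : forall a b, px a = px b -> py a = py b -> a = b;
  curve_cont : forall e, continuity (cx e) /\ continuity (cy e);
  curve_start : forall e, cx e 0 = px (src e) /\ cy e 0 = py (src e);
  curve_end : forall e, cx e 1 = px (tgt e) /\ cy e 1 = py (tgt e);
  curve_up : forall e s t, 0 <= s -> s < t -> t <= 1 -> cy e s < cy e t;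
  curve_avoid : forall e t w, 0 < t < 1 -> ~ (cx e t = px w /\ cy e t = py w);
  curve_nocross : forall e f s t, e <> f -> 0 <= s <= 1 -> 0 <= t <= 1 ->
      cx e s = cx f t -> cy e s = cy f t -> (s = 0 \/ s = 1) /\ (t = 0 \/ t = 1)
}.

Definition upward_planar (G : digraph) : Prop :=
  exists D : upward_planar_drawing G, True.

(* e1 lies to the left of e2 immediately above their common source u *)
Definition out_left (G : digraph) (D : upward_planar_drawing G) (e1 e2 : edge G) :=
  exists eps, 0 < eps /\
    forall s t, 0 < s <= 1 -> 0 < t <= 1 -> cy D e1 s = cy D e2 t ->
      cy D e1 s < py D (src e1) + eps -> cx D e1 s < cx D e2 t.

(* e1 lies to the left of e2 immediately below their common target v *)
Definition in_left (G : digraph) (D : upward_planar_drawing G) (e1 e2 : edge G) :=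
  exists eps, 0 < eps /\
    forall s t, 0 <= s < 1 -> 0 <= t < 1 -> cy D e1 s = cy D e2 t ->
      py D (tgt e1) - eps < cy D e1 s -> cx D e1 s < cx D e2 t.

(* left/right outgoing/incoming edges (meaningful when the degree is two) *)
Definition left_out (G : digraph) (D : upward_planar_drawing G) (e : edge G) :=
  exists e', e' <> e /\ src e' = src e /\ out_left D e e'.
Definition right_out (G : digraph) (D : upward_planar_drawing G) (e : edge G) :=
  exists e', e' <> e /\ src e' = src e /\ out_left D e' e.
Definition left_in (G : digraph) (D : upward_planar_drawing G) (e : edge G) :=
  exists e', e' <> e /\ tgt e' = tgt e /\ in_left D e e'.
Definition right_in (G : digraph) (D : upward_planar_drawing G) (e : edge G) :=
  exists e', e' <> e /\ tgt e' = tgt e /\ in_left D e' e.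

Definition bad_edge (G : digraph) (D : upward_planar_drawing G) (e : edge G) :=
  (left_out D e /\ left_in D e) \/ (right_out D e /\ right_in D e).

(* Fix an upward planar drawing D and a transitive edge e = (u,v), witnessed by a
   directed path a_1 ... a_k from u to v different from e.  Since curves are strictly
   increasing in y, each curve is the graph x = xat f y of a continuous function of the
   height y (we invert the y-parametrisation, which is a continuous increasing bijection
   of [0,1] onto the height range of f).  No a_i equals e, and each a_i lies in the
   height range of e; as distinct curves do not meet at interior heights, each a_i lies
   entirely to the left or entirely to the right of e (sign constancy via the IVT).
   At an inner vertex w of the path the curve of e passes strictly beside w, so a_i and
   a_(i+1) are on the same side of e (continuity at the height of w).  Hence a_1, which
   leaves u, and a_k, which enters v, are on the same side of e: if on the right, e is
   the left outgoing edge of u and the left incoming edge of v, otherwise the right one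
   of both. *)

From Stdlib Require Import Reals Lra ClassicalEpsilon.
From mathcomp Require Import all_boot.
Set Implicit Arguments. Unset Strict Implicit.
Local Open Scope R_scope.

Definition clamp (a b y : R) : R := Rmax a (Rmin b y).

Lemma clamp_in a b y : a <= b -> a <= clamp a b y <= b.
Proof. move=> Hab; split; [apply: Rmax_l | apply: Rmax_lub => //; apply: Rmin_l]. Qed.

Lemma clamp_id a b y : a <= y <= b -> clamp a b y = y.
Proof. move=> Hy; rewrite /clamp Rmin_right ?Rmax_right; lra. Qed.

Lemma clamp_lipschitz a b y z : a <= b -> Rabs (clamp a b y - clamp a b z) <= Rabs (y - z).
Proof.
move=> Hab; rewrite /clamp /Rmax /Rmin.
by repeat destruct Rle_dec; rewrite /Rabs; repeat destruct Rcase_abs; lra.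
Qed.

(* A continuous map c, strictly increasing on [0,1], has an inverse [inv01 c] defined on
   all of R (by clamping into [c 0, c 1]) that is continuous everywhere.  This is what
   turns an upward curve into the graph of a continuous function of the height. *)
Section MonotoneInverse.

Variable c : R -> R.
Hypothesis c_cont : continuity c.
Hypothesis c_incr : forall s t, 0 <= s -> s < t -> t <= 1 -> c s < c t.

Lemma incr_le s t : 0 <= s -> s <= t -> t <= 1 -> c s <= c t.
Proof. move=> H0 Hst H1; case: (Req_dec s t) => [->|Hne]; [lra | left; apply: c_incr; lra]. Qed.

Lemma incr_inj s t : 0 <= s <= 1 -> 0 <= t <= 1 -> c s = c t -> s = t.
Proof.
move=> Hs Ht Hc; case: (Rtotal_order s t) => [Hlt|[//|Hlt]].
- have := c_incr (proj1 Hs) Hlt (proj2 Ht); lra.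
- have := c_incr (proj1 Ht) Hlt (proj2 Hs); lra.
Qed.

Definition inv01 (y : R) : R :=
  epsilon (inhabits 0) (fun t => 0 <= t <= 1 /\ c t = clamp (c 0) (c 1) y).

Lemma inv01_spec y : 0 <= inv01 y <= 1 /\ c (inv01 y) = clamp (c 0) (c 1) y.
Proof.
rewrite /inv01; apply epsilon_spec.
have [Hlo Hhi] := clamp_in y (incr_le (Rle_refl 0) Rle_0_1 (Rle_refl 1)).
set z := clamp _ _ y in Hlo Hhi *.
have Hg : continuity (fun t => c t - z).
  by apply: continuity_minus => //; apply: continuity_const => ? ?.
have [t [Ht Hz]] := IVT_cor _ _ _ Hg Rle_0_1 ltac:(nra).
by exists t; split => //; lra.
Qed.

Lemma inv01_c t : 0 <= t <= 1 -> inv01 (c t) = t.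
Proof.
move=> Ht; have [Hi Hci] := inv01_spec (c t).
apply: incr_inj => //; rewrite Hci clamp_id //.
split; apply: incr_le; lra.
Qed.

Lemma inv01_interior y : c 0 < y < c 1 -> 0 < inv01 y < 1 /\ c (inv01 y) = y.
Proof.
move=> Hy; have [[Hi0 Hi1] Hci] := inv01_spec y.
rewrite clamp_id in Hci; last lra.
split=> //; split.
- case: Hi0 => // Hz; rewrite -Hz in Hci; lra.
- case: Hi1 => // Hz; rewrite Hz in Hci; lra.
Qed.

Lemma inv_modulus t0 eps : 0 <= t0 <= 1 -> 0 < eps ->
  exists d, 0 < d /\ forall t, 0 <= t <= 1 -> Rabs (c t - c t0) < d -> Rabs (t - t0) < eps.
Proof.
move=> Ht0 Heps.
have [d1 [Hd1 below]] : exists d1, 0 < d1 /\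
    forall t, 0 <= t <= 1 -> c t0 - d1 < c t -> t0 - eps < t.
  case: (Rlt_le_dec (t0 - eps) 0) => Hlo.
  - by exists 1; split => [|t Ht _]; lra.
  - exists (c t0 - c (t0 - eps)); split.
      by have := c_incr Hlo (ltac:(lra) : t0 - eps < t0) (proj2 Ht0); lra.
    move=> t Ht Hct; apply: Rnot_le_lt => Hle.
    by have := incr_le (proj1 Ht) Hle (ltac:(lra) : t0 - eps <= 1); lra.
have [d2 [Hd2 above]] : exists d2, 0 < d2 /\
    forall t, 0 <= t <= 1 -> c t < c t0 + d2 -> t < t0 + eps.
  case: (Rlt_le_dec 1 (t0 + eps)) => Hhi.
  - by exists 1; split => [|t Ht _]; lra.
  - exists (c (t0 + eps) - c t0); split.
      by have := c_incr (proj1 Ht0) (ltac:(lra) : t0 < t0 + eps) Hhi; lra.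
    move=> t Ht Hct; apply: Rnot_le_lt => Hle.
    by have := incr_le (ltac:(lra) : 0 <= t0 + eps) Hle (proj2 Ht); lra.
exists (Rmin d1 d2); split; first exact: Rmin_pos.
move=> t Ht /Rabs_def2 [Hup Hdn].
have := Rmin_l d1 d2; have := Rmin_r d1 d2 => Hm2 Hm1.
have := below t Ht ltac:(lra); have := above t Ht ltac:(lra) => Ha Hb.
apply: Rabs_def1; lra.
Qed.

Lemma inv01_cont : continuity inv01.
Proof.
move=> y eps /= Heps.
have [[Hi0 Hi1] Hci] := inv01_spec y.
have [d [Hd Hmod]] := inv_modulus (conj Hi0 Hi1) Heps.
exists d; split => // x [_ Hx]; rewrite /R_dist in Hx *.
have [Hx01 Hcx] := inv01_spec x.
apply: Hmod => //; rewrite Hcx Hci.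
apply: Rle_lt_trans (clamp_lipschitz _ _ _) Hx.
exact: incr_le (Rle_refl 0) Rle_0_1 (Rle_refl 1).
Qed.

End MonotoneInverse.

Definition sgn (s : bool) : R := if s then 1 else -1.

Lemma positive_near g x : continuity_pt g x -> 0 < g x ->
  exists d, 0 < d /\ forall y, Rabs (y - x) < d -> 0 < g y.
Proof.
move=> Hg Hx; have [d [Hd Hnear]] := Hg (g x) Hx.
exists d; split => // y Hy; case: (Req_dec y x) => [-> //|Hne].
have /Rabs_def2 [_ Hlow] := Hnear y (conj (conj I (not_eq_sym Hne)) Hy); lra.
Qed.

Lemma nonneg_at_ends g a b : continuity g -> a < b ->
  (forall y, a < y < b -> 0 < g y) -> 0 <= g a /\ 0 <= g b.
Proof.
move=> Hg Hab Hpos.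
have Hend x : (x = a \/ x = b) -> 0 <= g x.
  move=> Hx; apply: Rnot_lt_le => Hneg.
  have Hopp : continuity (fun y => - g y) := continuity_opp _ Hg.
  have [d [Hd Hnear]] := positive_near (Hopp x) ltac:(lra).
  have Hh := Rmin_pos _ _ Hd (ltac:(lra) : 0 < b - a).
  have := Rmin_l d (b - a); have := Rmin_r d (b - a).
  set h := Rmin d (b - a) in Hh * => Hhb Hhd.
  have [y [Hy Hyx]] : exists y, a < y < b /\ Rabs (y - x) < d.
    by case: Hx => ->; [exists (a + h / 2) | exists (b - h / 2)];
      split; try apply: Rabs_def1; lra.
  have := Hpos y Hy; have := Hnear y Hyx; lra.
by split; apply: Hend; [left | right].
Qed.

Lemma sign_constant g a b : continuity g -> (forall y, a < y < b -> g y <> 0) ->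
  exists s, forall y, a < y < b -> 0 < sgn s * g y.
Proof.
move=> Hg Hnz.
case: (Rlt_le_dec a b) => Hab; last by exists true => y Hy; lra.
have no_change x z : a < x < b -> a < z < b -> g x * g z <= 0 -> False.
  move=> Hx Hz Hp.
  have [w [Hw Hw0]] : exists w, Rmin x z <= w <= Rmax x z /\ g w = 0.
    case: (Rle_lt_dec x z) => Hxz.
    - have [w Hw] := IVT_cor _ _ _ Hg Hxz Hp.
      by exists w; rewrite Rmin_left ?Rmax_right.
    - have [w Hw] := IVT_cor _ _ _ Hg (Rlt_le _ _ Hxz) ltac:(lra).
      by exists w; rewrite Rmin_right ?Rmax_left; try lra.
  have Hwab : a < w < b.
    by move: Hw; rewrite /Rmin /Rmax; repeat destruct Rle_dec; lra.
  exact: Hnz Hwab Hw0.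
set m := (a + b) / 2; have Hm : a < m < b by rewrite /m; lra.
have Hgm := Hnz m Hm.
case: (Rlt_dec 0 (g m)) => Hsm; [exists true | exists false] => y Hy /=;
  have Hgy := Hnz y Hy.
- case: (Rlt_le_dec 0 (g y)) => Hsy; first lra.
  by exfalso; apply: (no_change y m) => //; nra.
- case: (Rlt_le_dec (g y) 0) => Hsy; first lra.
  by exfalso; apply: (no_change y m) => //; nra.
Qed.

Section Drawing.

Variables (G : digraph) (D : upward_planar_drawing G).

Lemma cy_incr f s t : 0 <= s -> s < t -> t <= 1 -> cy D f s < cy D f t.
Proof. exact: curve_up. Qed.

Lemma cy_cont f : continuity (cy D f).
Proof. exact: proj2 (curve_cont D f). Qed.

Lemma edge_rises f : py D (src f) < py D (tgt f).
Proof.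
have := cy_incr f (Rle_refl 0) Rlt_0_1 (Rle_refl 1).
by rewrite (proj2 (curve_start D f)) (proj2 (curve_end D f)).
Qed.

(* The curve of f, read as the graph of a function of the height y. *)
Definition xat (f : edge G) (y : R) : R := cx D f (inv01 (cy D f) y).

Lemma xat_param f t : 0 <= t <= 1 -> xat f (cy D f t) = cx D f t.
Proof. by move=> Ht; rewrite /xat inv01_c //; [apply: cy_cont | apply: cy_incr]. Qed.

Lemma xat_cont f : continuity (xat f).
Proof.
apply: (continuity_comp _ _ (inv01_cont (cy_cont f) (@cy_incr f))).
exact: proj1 (curve_cont D f).
Qed.

Lemma xat_src f : xat f (py D (src f)) = px D (src f).
Proof.
have [Hx Hy] := curve_start D f.
by have := xat_param f (conj (Rle_refl 0) Rle_0_1); rewrite Hx Hy.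
Qed.

Lemma xat_tgt f : xat f (py D (tgt f)) = px D (tgt f).
Proof.
have [Hx Hy] := curve_end D f.
by have := xat_param f (conj Rle_0_1 (Rle_refl 1)); rewrite Hx Hy.
Qed.

Lemma xat_interior f y : py D (src f) < y < py D (tgt f) ->
  exists t, 0 < t < 1 /\ cy D f t = y /\ xat f y = cx D f t.
Proof.
rewrite -(proj2 (curve_start D f)) -(proj2 (curve_end D f)) => Hy.
have [Ht Hct] := inv01_interior (cy_cont f) (@cy_incr f) Hy.
by exists (inv01 (cy D f) y).
Qed.


(* [side s e f]: at every interior height of f, the curve of f lies strictly to the
   right of the curve of e (s = true) or strictly to its left (s = false). *)
Definition side (s : bool) (e f : edge G) : Prop :=
  forall y, py D (src f) < y < py D (tgt f) -> 0 < sgn s * (xat f y - xat e y).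

Lemma side_irrefl s e : ~ side s e e.
Proof.
move=> He; have Hu := edge_rises e.
have := He ((py D (src e) + py D (tgt e)) / 2) ltac:(lra).
by rewrite Rminus_diag_eq // Rmult_0_r; lra.
Qed.

(* Two distinct curves cannot meet at an interior height, so an edge whose height range
   lies within that of e stays on one side of e. *)
Lemma side_dichotomy e f : f <> e ->
  py D (src e) <= py D (src f) -> py D (tgt f) <= py D (tgt e) -> exists s, side s e f.
Proof.
move=> Hfe Hsrc Htgt.
apply: (sign_constant (continuity_minus _ _ (xat_cont f) (xat_cont e))) => y Hy; rewrite /minus_fct => Hxy.
have [tf [Htf [Hcf Hxf]]] := xat_interior Hy.
have [te [Hte [Hce Hxe]]] := @xat_interior e y ltac:(lra).
have := @curve_nocross G D f e tf te Hfe ltac:(lra) ltac:(lra) ltac:(lra) ltac:(lra).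
by case=> [[]] Htf'; lra.
Qed.

(* The curve of e avoids every vertex w strictly inside its height range, so it passes
   w on one side; an edge entering w and an edge leaving w then lie on that same side. *)
Lemma side_at_vertex e a b s s' : tgt a = src b ->
  py D (src e) < py D (tgt a) < py D (tgt e) -> side s e a -> side s' e b -> s = s'.
Proof.
move=> Hab Hw Ha Hb.
have [t [Ht [Hct Hxt]]] := xat_interior Hw.
have Hoff : xat e (py D (tgt a)) <> px D (tgt a).
  by move=> Heq; apply: (@curve_avoid G D e t (tgt a) Ht); split; [rewrite -Hxt | rewrite Hct].
have Hgap f (r : bool) : continuity (fun y => sgn r * (xat f y - xat e y)).
  exact: continuity_scal _ _ (continuity_minus _ _ (xat_cont f) (xat_cont e)).
have [_ Ha_w] := nonneg_at_ends (Hgap a s) (edge_rises a) Ha.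
have [Hb_w _] := nonneg_at_ends (Hgap b s') (edge_rises b) Hb.
rewrite xat_tgt in Ha_w; rewrite xat_src -Hab in Hb_w.
by case: s s' Ha_w Hb_w {Ha Hb} => [] [] //= H1 H2; exfalso; apply: Hoff; lra.
Qed.


Lemma walk_rises (q : seq (edge G)) (w v : vert G) :
  walk_from w v q -> py D w <= py D v /\ (q <> [::] -> py D w < py D v).
Proof.
elim: q w => [|f q IH] w /=; first by move=> ->; split => //; lra.
move=> [<- Hw]; have [Hle _] := IH _ Hw; have := edge_rises f.
by split => //; lra.
Qed.

Lemma walk_last (q : seq (edge G)) (a : edge G) (w v : vert G) :
  walk_from w v (a :: q) -> tgt (last a q) = v.
Proof. by elim: q a w => [|b q IH] a w /= [_ Hw]; [| exact: IH Hw]. Qed.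

Lemma side_along_walk e s q a : a <> e -> py D (src e) <= py D (src a) ->
  walk_from (src a) (tgt e) (a :: q) -> side s e a -> side s e (last a q).
Proof.
elim: q a => [|b q IH] a //= Hae Hsrc [_ [Hb Hwalk]] Hside.
have Hrest : walk_from (src b) (tgt e) (b :: q) by [].
have [Htgt_b _] := walk_rises Hwalk.
have [_ Hbelow] := walk_rises Hrest; have {}Hbelow := Hbelow ltac:(done).
rewrite Hb in Hbelow.
have Ha := edge_rises a.
have Hbe : b <> e by move=> E; rewrite -E Hb in Hsrc; lra.
have [s' Hside_b] := side_dichotomy Hbe ltac:(rewrite Hb; lra) Htgt_b.
have Hss' := @side_at_vertex e a b s s' (esym Hb) ltac:(lra) Hside Hside_b.
by apply: IH => //; [rewrite Hb; lra | rewrite Hss'].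
Qed.

Lemma out_left_of_xat e1 e2 eps : 0 < eps ->
  (forall y, py D (src e1) < y < py D (src e1) + eps -> xat e1 y < xat e2 y) ->
  out_left D e1 e2.
Proof.
move=> Heps Hlt; exists eps; split => // s t Hs Ht Heq Hnear.
rewrite -(xat_param e1 (ltac:(lra) : 0 <= s <= 1)).
rewrite -(xat_param e2 (ltac:(lra) : 0 <= t <= 1)) -Heq.
apply: Hlt; split => //.
rewrite -(proj2 (curve_start D e1)); apply: cy_incr; lra.
Qed.

Lemma in_left_of_xat e1 e2 eps : 0 < eps ->
  (forall y, py D (tgt e1) - eps < y < py D (tgt e1) -> xat e1 y < xat e2 y) ->
  in_left D e1 e2.
Proof.
move=> Heps Hlt; exists eps; split => // s t Hs Ht Heq Hnear.
rewrite -(xat_param e1 (ltac:(lra) : 0 <= s <= 1)).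
rewrite -(xat_param e2 (ltac:(lra) : 0 <= t <= 1)) -Heq.
apply: Hlt; split => //.
rewrite -(proj2 (curve_end D e1)); apply: cy_incr; lra.
Qed.

Lemma first_edge_side e a s : a <> e -> src a = src e -> side s e a ->
  if s then left_out D e else right_out D e.
Proof.
move=> Hae Hsrc Hside; have Ha := edge_rises a.
have Hnear y : py D (src e) < y < py D (src e) + (py D (tgt a) - py D (src a)) ->
    0 < sgn s * (xat a y - xat e y).
  by move=> Hy; apply: Hside; rewrite -Hsrc in Hy; lra.
case: s {Hside} Hnear => /= Hnear; exists a; do 2 split => //.
- apply: (@out_left_of_xat e a (py D (tgt a) - py D (src a))); first lra.
  by move=> y Hy; have := Hnear y Hy; lra.
- apply: (@out_left_of_xat a e (py D (tgt a) - py D (src a))); first lra.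
  by rewrite Hsrc => y Hy; have := Hnear y ltac:(rewrite Hsrc; lra); lra.
Qed.

Lemma last_edge_side e b s : b <> e -> tgt b = tgt e -> side s e b ->
  if s then left_in D e else right_in D e.
Proof.
move=> Hbe Htgt Hside; have Hb := edge_rises b.
have Hnear y : py D (tgt e) - (py D (tgt b) - py D (src b)) < y < py D (tgt e) ->
    0 < sgn s * (xat b y - xat e y).
  by move=> Hy; apply: Hside; rewrite -Htgt in Hy; lra.
case: s {Hside} Hnear => /= Hnear; exists b; do 2 split => //.
- apply: (@in_left_of_xat e b (py D (tgt b) - py D (src b))); first lra.
  by move=> y Hy; have := Hnear y Hy; lra.
- apply: (@in_left_of_xat b e (py D (tgt b) - py D (src b))); first lra.
  by rewrite Htgt => y Hy; have := Hnear y ltac:(rewrite Htgt; lra); lra.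
Qed.

End Drawing.

Theorem mainTheorem4 (G : digraph) :
  simple_digraph G ->
  upward_planar G ->
  (forall v : vert G, (indeg v <= 2)%N /\ (outdeg v <= 2)%N) ->
  forall e : edge G, transitive_edge e ->
  forall D : upward_planar_drawing G, bad_edge D e.
Proof.
move=> _ _ _ e [[|a q] [[_ Hwalk] Hnot_e]] D //.
have [Hsrc Hwalk_q] := Hwalk.
(* The path is not [e], and a path starting with e would return to the height of tgt e. *)
have Hae : a <> e.
  move=> Hae; subst a; case: q Hwalk Hwalk_q Hnot_e => [|f q] // _ Hloop _.
  have [_ Hlt] := @walk_rises G D (f :: q) (tgt e) (tgt e) Hloop.
  by have := Hlt ltac:(done); lra.
have [Htgt_a _] := walk_rises D Hwalk_q.
have Hlow : py D (src e) <= py D (src a) by rewrite Hsrc; lra.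
have [s Hside_a] := side_dichotomy Hae Hlow Htgt_a.
have Hwalk_a : walk_from (src a) (tgt e) (a :: q) by rewrite Hsrc.
have Hside_b := side_along_walk Hae Hlow Hwalk_a Hside_a.
(* The last edge enters tgt e and, being beside e, differs from e. *)
have Hbe : last a q <> e by move=> E; rewrite E in Hside_b; exact: side_irrefl Hside_b.
have Hout := first_edge_side Hae Hsrc Hside_a.
have Hin := last_edge_side Hbe (walk_last Hwalk) Hside_b.
by case: s {Hside_a Hside_b} Hout Hin => /= Hout Hin; [left | right].
Qed.
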